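(* For every integer $n \geq 11$ and every integer $k$ with $5\le k\le n+1$, there exists a separating union-closed family $\mathcal{A}^{(k)}$ with base set $[n]$, height $h=k$ and $|\mathcal{B}(\mathcal{A}^{(k)})|=1$ such that \[\mathrm{Avg}(\mathcal{A}^{(k)}) = \frac{\sum_{A \in \mathcal{A}^{(k)}}|A|}{|\mathcal{A}^{(k)}|} < \frac{n}{2}.\]
   Context: A family of sets $\mathcal{A}$ is union-closed if it is a finite family of distinct finite sets with at least one nonempty member set, and $X,Y\in\mathcal{A}$ implies $X\cup Y\in\mathcal{A}$ (the empty set may be a member). For a family $\mathcal{F}$, $b(\mathcal{F})=\bigcup_{F\in\mathcal{F}}F$; the base set $b(\mathcal{A})$ is denoted $[n]=\{1,\dots,n\}$. $\mathcal{A}$ is separating if for any two distinct $x,y\in[n]$ there is $A\in\mathcal{A}$ containing exactly one of $x,y$. A chain in $\mathcal{A}$ is a subfamily any two distinct members of which are comparable under proper inclusion; the height $h$ of $\mathcal{A}$ is the maximum size of a chain in $\mathcal{A}$. For real $x\ge 0$, $\mathcal{A}_{<x}=\{A\in\mathcal{A} : |A|<x\}$. For $\mathcal{S}\subseteq\mathcal{A}$ and $S\in\mathcal{S}$, $\mathrm{irr}_{\mathcal{S}}(S)=\{s\in S : s\notin b(\mathcal{S}\setminus\{S\})\}$, and $\mathcal{S}$ is irredundant if $\mathrm{irr}_{\mathcal{S}}(S)\neq\emptyset$ for every $S\in\mathcal{S}$. Set $B=b(\mathcal{A}_{<n/2})$, and let $\mathcal{B}(\mathcal{A})$ denote any irredundant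 subfamily of $\mathcal{A}_{<n/2}$ of minimum size such that $b(\mathcal{B}(\mathcal{A}))=B$. *)

(* Families of subsets of [n] are modelled as
   F : {set {set 'I_n}} (the ground set {0,..,n-1} plays the role of [n]). *)
From mathcomp Require Import all_boot all_order all_algebra.
Set Implicit Arguments. Unset Strict Implicit. Unset Printing Implicit Defensive.

Section Families.
Variable n : nat.
Notation fam := {set {set 'I_n}}.

Definition base (F : fam) : {set 'I_n} := cover F.

Definition union_closed (F : fam) : Prop :=
  (exists2 X, X \in F & X != set0) /\
  (forall X Y, X \in F -> Y \in F -> X :|: Y \in F).

Definition separating (F : fam) : Prop :=
  forall x y : 'I_n, x != y -> exists2 A, A \in F & (x \in A) != (y \in A).

Definition is_chain (C : fam) : bool :=
  [forall X in C, forall Y in C, (X != Y) ==> ((X \proper Y) || (Y \proper X))].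

Definition height (F : fam) : nat :=
  \max_(C in powerset F | is_chain C) #|C|.

Definition small_part (F : fam) : fam := [set A in F | 2 * #|A| < n].

Definition irr (SS : fam) (S : {set 'I_n}) : {set 'I_n} := S :\: base (SS :\ S).

Definition irredundant (SS : fam) : Prop :=
  forall S, S \in SS -> irr SS S != set0.

Definition calB_candidate (F SS : fam) : Prop :=
  SS \subset small_part F /\ irredundant SS /\ base SS = base (small_part F).

(* SS is a (choice of) B(A): a candidate of minimum size *)
Definition is_calB (F SS : fam) : Prop :=
  calB_candidate F SS /\ (forall SS', calB_candidate F SS' -> #|SS| <= #|SS'|).

Definition avg (F : fam) : rat :=
  (\sum_(A in F) #|A|)%:R / #|F|%:R.

End Families.

From mathcomp Require Import all_boot all_order all_algebra.
From mathcomp Require Import zify.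
Import GRing.Theory Num.Theory.
Set Implicit Arguments. Unset Strict Implicit. Unset Printing Implicit Defensive.

(* Let m = (n-1)/2 (rounded down), so that a set has fewer than n/2 elements
   exactly when it has at most m.  The family consists of the subsets of
   {0,..,m-1} with at least a elements, the initial segments {0,..,i-1} for
   m < i <= p, the sets [n] \ {y} for p <= y <= n-2, and [n].  Two large
   members are nested or cover [n], and {0,..,m-1} lies in every large member,
   so the family is union-closed and {0,..,m-1} alone is B(A).  The member
   sizes are a,..,p, n-1, n, all realized by one chain, so the height is
   p + 3 - a, which is k for a = m + 3 - k and p = max(m, k - 3).  Finally only
   n - m members are large, each exceeding n/2 by at most n/2 - 1 except [n],
   while the (m-2)- and (m-1)-subsets of {0,..,m-1} alone fall short of n/2 by
   more in total, so the average size is below n/2. *)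

Lemma leq_sum_subset (T : finType) (A B : {set T}) (f : T -> nat) :
  A \subset B -> \sum_(x in A) f x <= \sum_(x in B) f x.
Proof. by move=> sAB; rewrite [X in _ <= X](big_setID A) /= (setIidPr sAB) leq_addr. Qed.

Lemma leq_sum_setU (T : finType) (A B : {set T}) (f : T -> nat) :
  \sum_(x in A :|: B) f x <= \sum_(x in A) f x + \sum_(x in B) f x.
Proof.
rewrite (big_setID A) setUK /= leq_add2l.
by apply: leq_sum_subset; rewrite setDUl setDv set0U subsetDl.
Qed.

Lemma leq_sum_imset (I T : finType) (D : {set I}) (h : I -> T) (f : T -> nat) :
  \sum_(y in h @: D) f y <= \sum_(x in D) f (h x).
Proof.
rewrite (partition_big_imset h); apply: leq_sum => y /imsetP [x Dx ->].
by rewrite (bigD1 x) /= ?Dx ?eqxx // leq_addr.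
Qed.

Lemma sum_card_draws (T : finType) (B : {set T}) j (g : nat -> nat) :
  \sum_(A in [set A : {set T} | A \subset B & #|A| == j]) g #|A| = 'C(#|B|, j) * g j.
Proof.
rewrite -cards_draws -sum_nat_const; apply: eq_bigr => A.
by rewrite inE => /andP [_ /eqP ->].
Qed.

(* Truncated subtraction makes [f x - c] and [c - f x] the excess and the
   deficit of [f x] relative to [c]. *)
Lemma sum_lt_mul_card (T : finType) (D : {set T}) (f : T -> nat) c :
  \sum_(x in D) (f x - c) < \sum_(x in D) (c - f x) -> \sum_(x in D) f x < c * #|D|.
Proof.
have : \sum_(x in D) (f x + (c - f x)) = \sum_(x in D) (c + (f x - c)).
  by apply: eq_bigr => x _; lia.
rewrite !big_split /= sum_nat_const mulnC; lia.
Qed.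

Section Families.
Variable n : nat.
Implicit Types (F C : {set {set 'I_n}}) (A S : {set 'I_n}).

Lemma chain_card_inj C : is_chain C -> {in C &, injective (fun A => #|A|)}.
Proof.
move=> /forall_inP chC A B AC BC eq_card; apply/eqP; apply: contraT => neq_AB.
have /forall_inP /(_ B BC) := chC A AC; rewrite neq_AB /=.
by case/orP => /proper_card; rewrite eq_card ltnn.
Qed.

Lemma chain_card_le F C (s : seq nat) :
  C \subset F -> is_chain C -> {in F, forall A, #|A| \in s} -> #|C| <= size s.
Proof.
move=> sCF chC sizeF; rewrite cardE -(size_map (fun A => #|A|)).
apply: uniq_leq_size.
  by rewrite map_inj_in_uniq ?enum_uniq // => A B; rewrite !mem_enum; apply: chain_card_inj.
by move=> z /mapP [A]; rewrite mem_enum => AC ->; apply/sizeF/(subsetP sCF).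
Qed.

Lemma chain_imset_proper N (f : 'I_N -> {set 'I_n}) :
  (forall i j : 'I_N, i < j -> f i \proper f j) -> is_chain (f @: setT) /\ #|f @: setT| = N.
Proof.
move=> f_proper; split.
  apply/forall_inP => _ /imsetP [i _ ->]; apply/forall_inP => _ /imsetP [j _ ->].
  apply/implyP => neq_f; case: (ltngtP i j) => [lt_ij | lt_ji | /ord_inj eq_ij].
  - by rewrite f_proper.
  - by rewrite orbC f_proper.
  - by move: neq_f; rewrite eq_ij eqxx.
rewrite card_imset ?cardsT ?card_ord // => i j eq_f.
by case: (ltngtP i j) => [/f_proper | /f_proper | /ord_inj //]; rewrite eq_f properxx.
Qed.

Lemma height_eq F h :
  (forall C, C \subset F -> is_chain C -> #|C| <= h) ->
  (exists2 C : {set {set 'I_n}}, C \subset F /\ is_chain C & #|C| = h) -> height F = h.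
Proof.
move=> chain_le [C [sCF chC] eq_Ch]; apply/eqP; rewrite eqn_leq; apply/andP; split.
  by apply/bigmax_leqP => D /andP [/[!powersetE] sDF chD]; apply: chain_le.
by rewrite -eq_Ch /height (bigD1 C) ?leq_maxl //= powersetE sCF.
Qed.

Lemma is_calB_set1 F S :
  S \in small_part F -> S != set0 -> base (small_part F) = S -> is_calB F [set S].
Proof.
move=> S_small S_neq0 baseS; split.
  split; first by rewrite sub1set.
  split; last by rewrite /base cover1.
  by move=> _ /set1P ->; rewrite /irr setDv /base /cover big_set0 setD0.
move=> SS [_ [_ baseSS]]; rewrite cards1 card_gt0.
apply: contraNneq S_neq0 => SS0.
by rewrite -baseS -baseSS SS0 /base /cover big_set0.
Qed.

Lemma avg_lt_half F :
  0 < #|F| -> \sum_(A in F) #|A| * 2 < n * #|F| -> (avg F < n%:R / 2%:R :> rat)%R.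
Proof.
move=> F_gt0 lt_sum; rewrite /avg ltr_pdivrMr ?ltr0n // mulrAC ltr_pdivlMr ?ltr0n //.
by rewrite -!natrM ltr_nat big_distrl.
Qed.

End Families.

Section Construction.
Variables n m a p : nat.
Implicit Type A : {set 'I_n}.

Definition iseg i : {set 'I_n} := [set x : 'I_n | x < i].
Definition allbut y : {set 'I_n} := [set x : 'I_n | val x != y].
(* Large members are indexed by m <= x < n, so that there are n - m of them. *)
Definition upper x : {set 'I_n} :=
  if x < p then iseg x.+1 else if x < n.-1 then allbut x else setT.
Definition lower : {set {set 'I_n}} := [set A : {set 'I_n} | (A \subset iseg m) && (a <= #|A|)].
Definition fam : {set {set 'I_n}} := lower :|: [set upper x | x : 'I_n in ~: iseg m].

Lemma card_iseg i : i <= n -> #|iseg i| = i.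
Proof.
move=> le_in; have -> : iseg i = widen_ord le_in @: 'I_i.
  apply/setP => x; rewrite inE; apply/idP/imsetP => [lt_xi | [y _ ->]]; last exact: (ltn_ord y).
  by exists (Ordinal lt_xi); last apply: val_inj.
by rewrite card_imset ?card_ord // => x y /(congr1 val) /=; exact: ord_inj.
Qed.

Lemma card_allbut y : y < n -> #|allbut y| = n.-1.
Proof.
move=> lt_yn; have -> : allbut y = [set~ Ordinal lt_yn].
  by apply/setP => x; rewrite !inE -val_eqE.
by rewrite cardsC1 card_ord.
Qed.

Lemma iseg_subset i j : i <= j -> iseg i \subset iseg j.
Proof. by move=> le_ij; apply/subsetP => x; rewrite !inE => /leq_trans; apply. Qed.

Lemma iseg_subset_allbut i y : i <= y -> iseg i \subset allbut y.
Proof.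
move=> le_iy; apply/subsetP => x; rewrite !inE => lt_xi.
by rewrite ltn_eqF // (leq_trans lt_xi le_iy).
Qed.

Lemma allbut_setU y z : y != z -> allbut y :|: allbut z = setT.
Proof.
move=> neq_yz; apply/setP => x; rewrite !inE -negb_and.
by apply: contra neq_yz => /andP [/eqP <- /eqP <-].
Qed.

Lemma card_upper x : x < n ->
  #|upper x| = if x < p then x.+1 else if x < n.-1 then n.-1 else n.
Proof.
move=> lt_xn; rewrite /upper.
case: ifP => _; first exact: card_iseg.
by case: ifP => _; [exact: card_allbut | rewrite cardsT card_ord].
Qed.

Lemma iseg_subset_upper x : m <= x -> iseg m \subset upper x.
Proof.
move=> le_mx; rewrite /upper.
case: ifP => _; first by apply: iseg_subset; apply: leqW.
by case: ifP => _; [exact: iseg_subset_allbut | exact: subsetT].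
Qed.

Lemma upper_subset_or_cover x y : x <= y -> upper x \subset upper y \/ upper x :|: upper y = setT.
Proof.
move=> le_xy; rewrite /upper.
have [lt_xp | le_px] := ltnP x p.
  left; have [lt_yp | le_py] := ltnP y p; first exact: iseg_subset.
  by case: ifP => _; [apply: iseg_subset_allbut; lia | exact: subsetT].
rewrite [y < p]ltnNge (leq_trans le_px le_xy) /=.
have [lt_xn | le_nx] := ltnP x n.-1; last first.
  by left; rewrite [y < n.-1]ltnNge (leq_trans le_nx le_xy).
case: ifP => _; last by left; exact: subsetT.
by case: (eqVneq x y) => [-> | neq_xy]; [left | right; exact: allbut_setU].
Qed.

Lemma lower_subset A : A \in lower -> A \subset iseg m.
Proof. by rewrite inE => /andP []. Qed.

Lemma lower_in_fam A : A \subset iseg m -> a <= #|A| -> A \in fam.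
Proof. by move=> sAm le_aA; rewrite !inE sAm le_aA. Qed.

Lemma upper_in_fam x : m <= x < n -> upper x \in fam.
Proof.
case/andP => le_mx lt_xn; rewrite inE; apply/orP; right.
by apply/imsetP; exists (Ordinal lt_xn); rewrite // !inE -leqNgt.
Qed.

Lemma fam_cases A : A \in fam -> A \in lower \/ exists2 x : 'I_n, m <= x & A = upper x.
Proof.
rewrite inE => /orP [A_low | /imsetP [x]]; first by left.
by rewrite !inE -leqNgt => le_mx ->; right; exists x.
Qed.

Hypothesis a2_le_m : a.+2 <= m.
Hypothesis m_le_p : m <= p.
Hypothesis p2_le_n : p.+2 <= n.
Hypothesis m2_lt_n : m.*2 < n.
Hypothesis n_le_m2S : n <= m.*2.+2.
Hypothesis m_ge4 : 4 <= m.

Lemma setT_in_fam : setT \in fam.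
Proof.
have -> : setT = upper n.-1 by rewrite /upper ltnn ifN // -leqNgt; lia.
by apply: upper_in_fam; lia.
Qed.

Lemma iseg_in_fam i : a <= i <= p -> iseg i \in fam.
Proof.
case/andP => le_ai le_ip; have [le_im | lt_mi] := leqP i m.
  by apply: lower_in_fam; [exact: iseg_subset | rewrite card_iseg //; lia].
have -> : iseg i = upper i.-1 by rewrite /upper prednK; [rewrite ifT //|]; lia.
by apply: upper_in_fam; lia.
Qed.

Lemma allbut_in_fam y : p <= y < n.-1 -> allbut y \in fam.
Proof.
case/andP => le_py lt_yn; have -> : allbut y = upper y by rewrite /upper ltnNge le_py lt_yn.
by apply: upper_in_fam; lia.
Qed.

Lemma fam_union_closed : union_closed fam.
Proof.
split.
  exists setT; first exact: setT_in_fam.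
  have n_gt0 : 0 < n by lia.
  by apply/set0Pn; exists (Ordinal n_gt0).
move=> X Y /fam_cases [X_low | [x le_mx ->]] /fam_cases [Y_low | [y le_my ->]].
- rewrite !inE in X_low Y_low *; case/andP: X_low => sXm le_aX; case/andP: Y_low => sYm _.
  by rewrite subUset sXm sYm (leq_trans le_aX) ?subset_leq_card ?subsetUl.
- have sXy := subset_trans (lower_subset X_low) (iseg_subset_upper le_my).
  by rewrite (setUidPr sXy) upper_in_fam ?le_my ?ltn_ord.
- have sYx := subset_trans (lower_subset Y_low) (iseg_subset_upper le_mx).
  by rewrite (setUidPl sYx) upper_in_fam ?le_mx ?ltn_ord.
- wlog le_xy : x y le_mx le_my / x <= y.
    by move=> wlog_xy; case: (leqP x y) => [|/ltnW] le; [|rewrite setUC]; apply: wlog_xy.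
  case: (upper_subset_or_cover le_xy) => [/setUidPr -> | ->]; last exact: setT_in_fam.
  by rewrite upper_in_fam ?le_my ?ltn_ord.
Qed.

Lemma fam_base : base fam = setT.
Proof. by apply/eqP; rewrite eqEsubset subsetT; exact: (bigcup_sup setT setT_in_fam). Qed.

Lemma fam_separating : separating fam.
Proof.
suff sep_lt (x y : 'I_n) : x < y -> exists2 A, A \in fam & (x \in A) != (y \in A).
  move=> x y; rewrite neq_ltn => /orP [/sep_lt // | /sep_lt [A fA sepA]].
  by exists A; rewrite // eq_sym.
move=> lt_xy; have lt_yn := ltn_ord y.
have [le_yp | lt_py] := leqP y p.
  have [lt_ym | le_my] := ltnP y m.
    exists (iseg m :\ y).
      apply: lower_in_fam; first exact: subD1set.
      have := cardsD1 y (iseg m); rewrite card_iseg; last lia.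
      by rewrite inE lt_ym add1n -ltnS => m_eq; rewrite -m_eq; lia.
    by rewrite !inE (ltn_trans lt_xy lt_ym) lt_ym eqxx neq_ltn lt_xy.
  exists (iseg y); first by apply: iseg_in_fam; lia.
  by rewrite !inE lt_xy ltnn.
have [lt_xp | le_px] := ltnP x p.
  exists (iseg p); first by apply: iseg_in_fam; lia.
  by rewrite !inE lt_xp ltnNge (ltnW lt_py).
exists (allbut x); first by apply: allbut_in_fam; lia.
by rewrite !inE eqxx (gtn_eqF lt_xy).
Qed.

Lemma card_mem_fam A : A \in fam -> #|A| \in iota a (p.+1 - a) ++ [:: n.-1; n].
Proof.
move=> /fam_cases [A_low | [x le_mx ->]]; rewrite mem_cat mem_iota !inE.
  have := subset_leq_card (lower_subset A_low); rewrite inE in A_low.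
  by case/andP: A_low => _ le_aA; rewrite card_iseg; lia.
by rewrite card_upper //; case: ifP => [lt_xp|_]; [|case: ifP => _]; rewrite ?eqxx ?orbT //; lia.
Qed.

Definition tower t : {set 'I_n} :=
  if t <= p then iseg t else if t == p.+1 then allbut p else setT.

Lemma tower_in_fam t : a <= t -> tower t \in fam.
Proof.
move=> le_at; rewrite /tower; case: ifP => [le_tp | _]; first by apply: iseg_in_fam; lia.
by case: ifP => _; [apply: allbut_in_fam; lia | exact: setT_in_fam].
Qed.

Lemma tower_proper i j : i < j <= p.+2 -> tower i \proper tower j.
Proof.
case/andP => lt_ij le_jp; have lt_pn : p < n.-1 by lia.
rewrite properEcard /tower.
have [le_ip | lt_pi] := leqP i p.
  rewrite card_iseg; last lia.
  have [le_jp' | lt_pj] := leqP j p; first by rewrite iseg_subset ?card_iseg //; lia.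
  case: ifP => _; last by rewrite subsetT cardsT card_ord; lia.
  by rewrite iseg_subset_allbut ?card_allbut //; lia.
have -> : i = p.+1 by lia.
have -> : j = p.+2 by lia.
rewrite eqxx ifN ?ifN ?subsetT ?card_allbut ?cardsT ?card_ord //; lia.
Qed.

Lemma fam_height : height fam = p.+3 - a.
Proof.
apply: height_eq => [C sCF chC | ].
  have := chain_card_le sCF chC card_mem_fam; rewrite size_cat size_iota /=; lia.
pose f (t : 'I_(p.+3 - a)) := tower (a + t).
have [chain_f card_f] : is_chain (f @: setT) /\ #|f @: setT| = p.+3 - a.
  apply: chain_imset_proper => i j lt_ij; apply: tower_proper.
  by have := ltn_ord j; lia.
exists (f @: setT) => //; split => //.
by apply/subsetP => _ /imsetP [t _ ->]; apply: tower_in_fam; exact: leq_addr.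
Qed.

Lemma iseg_small_part : iseg m \in small_part fam.
Proof. by rewrite inE card_iseg ?lower_in_fam ?card_iseg //; lia. Qed.

Lemma base_small_part_fam : base (small_part fam) = iseg m.
Proof.
apply/eqP; rewrite eqEsubset (bigcup_sup _ iseg_small_part) andbT.
apply/bigcupsP => A; rewrite inE => /andP [/fam_cases [/lower_subset // | [x le_mx ->]]].
by rewrite card_upper //; case: ifP => _; [|case: ifP => _]; lia.
Qed.

Lemma fam_calB : is_calB fam [set iseg m].
Proof.
apply: is_calB_set1 iseg_small_part _ base_small_part_fam.
by rewrite -card_gt0 card_iseg; lia.
Qed.

Lemma fam_excess : \sum_(A in fam) (#|A| * 2 - n) <= (n.-1 - m) * (n - 2) + n.
Proof.
apply: leq_trans (leq_sum_setU _ _ _) _.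
rewrite big1 ?add0n => [|A /lower_subset /subset_leq_card]; last by rewrite card_iseg; lia.
apply: leq_trans (leq_sum_imset _ _ _) _.
have lt_topn : n.-1 < n by lia.
pose top := Ordinal lt_topn.
have top_upper : top \in ~: iseg m by rewrite !inE -leqNgt /=; lia.
have card_upper_top : #|(~: iseg m) :\ top| = n.-1 - m.
  apply/eqP; rewrite -(eqn_add2l (top \in ~: iseg m)) -cardsD1 top_upper.
  by rewrite cardsCs setCK card_ord card_iseg; lia.
rewrite (big_setD1 top top_upper) addnC leq_add //=.
  by rewrite card_upper //; case: ifP => _; [|case: ifP => _]; lia.
rewrite -card_upper_top -sum_nat_const; apply: leq_sum => x.
rewrite !inE -leqNgt -val_eqE /= => /andP [ne_x_top le_mx].
have := ltn_ord x; rewrite card_upper //; case: ifP => [lt_xp|_]; [|case: ifP => ?]; lia.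
Qed.

Lemma fam_deficit :
  'C(m, 2) * (n - (m - 2) * 2) + m * (n - (m - 1) * 2) <= \sum_(A in fam) (n - #|A| * 2).
Proof.
pose layer j := [set A : {set 'I_n} | A \subset iseg m & #|A| == j].
have layer_sub j : a <= j -> layer j \subset fam.
  move=> le_aj; apply/subsetP => A; rewrite inE => /andP [sAm /eqP eq_Aj].
  by apply: lower_in_fam; rewrite ?eq_Aj.
have disj : [disjoint layer (m - 1) & layer (m - 2)].
  apply/pred0P => A /=; rewrite !inE; apply/negbTE/negP.
  by case/andP => /andP [_ /eqP ->] /andP [_ /eqP]; lia.
have sub_fam : layer (m - 2) :|: layer (m - 1) \subset fam.
  by rewrite subUset !layer_sub //; lia.
apply: leq_trans (leq_sum_subset _ sub_fam).
rewrite (big_setID (layer (m - 2))) setUK setDUl setDv set0U (setDidPl disj) /=.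
rewrite !(sum_card_draws _ _ (fun j => n - j * 2)) card_iseg ?bin_sub ?bin1 //; lia.
Qed.

Lemma excess_bound_lt_deficit_bound :
  (n.-1 - m) * (n - 2) + n < 'C(m, 2) * (n - (m - 2) * 2) + m * (n - (m - 1) * 2).
Proof.
have bin2m : 'C(m, 2) * 2 = m * (m - 1).
  by have := bin_ffact m 2; rewrite ffactnS ffactn1 /= => ->; lia.
have [-> | ->] : n = m.*2.+1 \/ n = m.*2.+2 by lia.
- have -> : m.*2.+1 - (m - 2) * 2 = 5 by lia.
  have -> : m.*2.+1 - (m - 1) * 2 = 3 by lia.
  nia.
- have -> : m.*2.+2 - (m - 2) * 2 = 6 by lia.
  have -> : m.*2.+2 - (m - 1) * 2 = 4 by lia.
  nia.
Qed.

Lemma fam_avg : (avg fam < n%:R / 2%:R :> rat)%R.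
Proof.
apply: avg_lt_half; first by apply/card_gt0P; exists setT; exact: setT_in_fam.
apply: sum_lt_mul_card; apply: leq_ltn_trans fam_excess _.
exact: leq_trans excess_bound_lt_deficit_bound fam_deficit.
Qed.

End Construction.

Theorem theorem3p2 :
  forall n k : nat, 11 <= n -> 5 <= k <= n.+1 ->
  exists F : {set {set 'I_n}},
    [/\ union_closed F,
        base F = [set: 'I_n],
        separating F,
        height F = k &
        (exists SS, is_calB F SS /\ #|SS| = 1)] /\
    (avg F < n%:R / 2%:R :> rat)%R.
Proof.
move=> n k n_ge11 /andP [k_ge5 k_le_n1].
have [m m2_lt_n n_le_m2S] : exists2 m, m.*2 < n & n <= m.*2.+2.
  by exists (n.-1)./2; have := odd_double_half n.-1; case: (odd _) => /=; lia.
exists (fam n m (m.+3 - k) (maxn m (k - 3))); split; last by apply: fam_avg; lia.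
split.
- by apply: fam_union_closed; lia.
- by apply: fam_base; lia.
- by apply: fam_separating; lia.
- by rewrite fam_height; lia.
- exists [set iseg n m]; split; last exact: cards1.
  by apply: fam_calB; lia.
Qed.
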